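(* Under the standing assumptions of the context, with $C$ defined from $E$ and $\le$ as in the context, the order $\le$ is compatible with $C$, i.e. $x<y<z$ implies $C(x;y,z)\vee C(z;x,y)$; and $C$ satisfies (C8): whenever $C(x;y,z)$ holds there exist $w_1,w_2\in N$ with $C(w_1;y,z)\wedge C(x;y,w_1)\wedge w_1<\min\{y,z\}$ and $C(w_2;y,z)\wedge C(x;y,w_2)\wedge\max\{y,z\}<w_2$.
   Context: Standing assumptions: $(N,E)$ is a countably infinite 3-hypergraph (a set $N$ with a set $E$ of 3-element subsets, the edges) which is ${\le}4$-set-homogeneous (for $s\le4$, whenever $U,V\subseteq N$ of size $s$ carry isomorphic induced subhypergraphs there is $g\in \mathrm{Aut}(N,E)$ with $U^g=V$), and $\le$ is a total order on $N$ preserved by $\mathrm{Aut}(N,E)$. Moreover, for each $i\in\{1,2,3\}$ there is a 4-subset of $N$ containing exactly $i$ edges, and for all $u_1<u_2<u_3<u_4$ in $N$: if $\{u_1,\dots,u_4\}$ contains exactly one edge, it is $\{u_1,u_2,u_3\}$; if it contains exactly two edges, they are $\{u_1,u_3,u_4\}$ and $\{u_2,u_3,u_4\}$; if it contains exactly three edges, they are the three 3-subsets containing $u_1$. The relation $C$ on $N$ is: $C(x;y,z)$ iff either $y=z\ne x$; or $x,y,z$ distinct, $x<\min\{y,z\}$ and $\{x,y,z\}\in E$; or $x,y,z$ distinct, $\max\{y,z\}<x$ and $\{x,y,z\}\notin E$. *)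

From Stdlib Require Import List Arith.
Import ListNotations.

Section Defs.
Context {N : Type}.

Definition is_3hypergraph (E : N -> N -> N -> bool) : Prop :=
  (forall x y z, E x y z = E y x z) /\
  (forall x y z, E x y z = E x z y) /\
  (forall x y z, E x y z = true -> x <> y /\ y <> z /\ x <> z).

Definition countably_infinite : Prop :=
  exists e : nat -> N,
    (forall m n, e m = e n -> m = n) /\ (forall x, exists n, e n = x).

Definition is_total_order (le : N -> N -> Prop) : Prop :=
  (forall x, le x x) /\
  (forall x y, le x y -> le y x -> x = y) /\
  (forall x y z, le x y -> le y z -> le x z) /\
  (forall x y, le x y \/ le y x).

Definition lt_of (le : N -> N -> Prop) (x y : N) : Prop := le x y /\ x <> y.

Definition is_aut (E : N -> N -> N -> bool) (g : N -> N) : Prop :=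
  (exists h : N -> N, (forall x, h (g x) = x) /\ (forall y, g (h y) = y)) /\
  (forall x y z, E (g x) (g y) (g z) = E x y z).

(* <=4-set-homogeneity: finite subsets U, V are given as duplicate-free lists;
   an isomorphism of induced subhypergraphs is a map f injective on U,
   mapping U into V (hence onto V, as |U| = |V|) and preserving E on U. *)
Definition set_homogeneous_le4 (E : N -> N -> N -> bool) : Prop :=
  forall U V : list N,
    NoDup U -> NoDup V -> length U <= 4 -> length U = length V ->
    (exists f : N -> N,
        (forall x, In x U -> In (f x) V) /\
        (forall x y, In x U -> In y U -> f x = f y -> x = y) /\
        (forall x y z, In x U -> In y U -> In z U ->
           E (f x) (f y) (f z) = E x y z)) ->
    exists g, is_aut E g /\ (forall v, In v V <-> exists u, In u U /\ g u = v).

Definition order_preserved (E : N -> N -> N -> bool) (le : N -> N -> Prop) : Prop :=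
  forall g, is_aut E g -> forall x y, le x y -> le (g x) (g y).

Definition distinct4 (a b c d : N) : Prop :=
  a <> b /\ a <> c /\ a <> d /\ b <> c /\ b <> d /\ c <> d.

Definition nedges4 (E : N -> N -> N -> bool) (a b c d : N) : nat :=
  Nat.b2n (E a b c) + Nat.b2n (E a b d) + Nat.b2n (E a c d) + Nat.b2n (E b c d).

Definition standing_assumptions (E : N -> N -> N -> bool) (le : N -> N -> Prop) : Prop :=
  countably_infinite /\
  is_3hypergraph E /\
  set_homogeneous_le4 E /\
  is_total_order le /\
  order_preserved E le /\
  (forall i, 1 <= i <= 3 ->
     exists a b c d, distinct4 a b c d /\ nedges4 E a b c d = i) /\
  (forall u1 u2 u3 u4,
     lt_of le u1 u2 -> lt_of le u2 u3 -> lt_of le u3 u4 ->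
     (nedges4 E u1 u2 u3 u4 = 1 -> E u1 u2 u3 = true) /\
     (nedges4 E u1 u2 u3 u4 = 2 -> E u1 u3 u4 = true /\ E u2 u3 u4 = true) /\
     (nedges4 E u1 u2 u3 u4 = 3 ->
        E u1 u2 u3 = true /\ E u1 u2 u4 = true /\ E u1 u3 u4 = true)).

Definition Crel (E : N -> N -> N -> bool) (le : N -> N -> Prop) (x y z : N) : Prop :=
  (y = z /\ y <> x) \/
  (x <> y /\ y <> z /\ x <> z /\ lt_of le x y /\ lt_of le x z /\ E x y z = true) \/
  (x <> y /\ y <> z /\ x <> z /\ lt_of le y x /\ lt_of le z x /\ E x y z = false).

End Defs.

(* Homogeneity together with the invariance of the order makes any two increasing pairs,
   and any two increasing triples with the same edge status, conjugate under an
   automorphism; so a configuration realised by an increasing 4-set can be transported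
   onto a given pair or triple, the remaining point landing in the prescribed position.
   The hypotheses on 4-sets leave exactly five types of increasing 4-sets, with 0, 1, 2,
   3 or 4 edges, and all of them occur.  The witnesses for (C8) are the transported
   fourth points of the complete, empty, one-edge and three-edge types, chosen by
   whether x is below or above y and z; compatibility is read off the definition of C. *)

From Stdlib Require Import List Arith Lia Classical ClassicalEpsilon.
Import ListNotations.

Section StrictOrder.

Context {N : Type} {le : N -> N -> Prop}.
Hypothesis le_total : is_total_order le.
Local Notation lt := (lt_of le).

Lemma lt_of_irrefl {x} : ~ lt x x.
Proof. intros [_ H]; auto. Qed.

Lemma lt_of_neq {x y} : lt x y -> x <> y.
Proof. intros [_ H]; exact H. Qed.

Lemma lt_of_trans {x y z} : lt x y -> lt y z -> lt x z.
Proof.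
  destruct le_total as (_ & le_antisym & le_trans & _).
  intros [xy nxy] [yz nyz]; split; [eauto|].
  intros <-; auto.
Qed.

Lemma lt_of_asym {x y} : lt x y -> ~ lt y x.
Proof.
  destruct le_total as (_ & le_antisym & _ & _).
  intros [xy nxy] [yx _]; auto.
Qed.

Lemma lt_of_total {x y} : x <> y -> lt x y \/ lt y x.
Proof.
  destruct le_total as (_ & _ & _ & le_tot).
  intros nxy; destruct (le_tot x y); [left | right]; split; auto.
Qed.

Ltac lt_contradiction :=
  exfalso;
  match goal with
  | H : lt_of le ?u ?u |- _ => exact (lt_of_irrefl H)
  | H1 : lt_of le ?u ?v, H2 : lt_of le ?v ?u |- _ => exact (lt_of_asym H1 H2)
  end.

Definition increasing4 (p q r s : N) : Prop := lt p q /\ lt q r /\ lt r s.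

Lemma NoDup_increasing2 {a b} : lt a b -> NoDup [a; b].
Proof.
  intros ab; repeat constructor; simpl; intuition subst; lt_contradiction.
Qed.

Lemma NoDup_increasing3 {a b c} : lt a b -> lt b c -> NoDup [a; b; c].
Proof.
  intros ab bc; pose proof (lt_of_trans ab bc) as ac.
  repeat constructor; simpl; intuition subst; lt_contradiction.
Qed.

Lemma increasing2_in_increasing2 {a b x y} :
  lt a b -> lt x y -> In x [a; b] -> In y [a; b] -> x = a /\ y = b.
Proof.
  intros ab xy Hx Hy; simpl in Hx, Hy.
  destruct Hx as [<-|[<-|[]]]; destruct Hy as [<-|[<-|[]]];
    solve [ auto | lt_contradiction ].
Qed.

Lemma increasing3_in_increasing3 {a b c x y z} :
  lt a b -> lt b c -> lt x y -> lt y z ->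
  In x [a; b; c] -> In y [a; b; c] -> In z [a; b; c] -> x = a /\ y = b /\ z = c.
Proof.
  intros ab bc xy yz Hx Hy Hz.
  pose proof (lt_of_trans ab bc) as ac; pose proof (lt_of_trans xy yz) as xz.
  simpl in Hx, Hy, Hz.
  destruct Hx as [<-|[<-|[<-|[]]]]; destruct Hy as [<-|[<-|[<-|[]]]];
    destruct Hz as [<-|[<-|[<-|[]]]];
    solve [ auto | lt_contradiction ].
Qed.

Lemma sort_distinct4 (P : N -> N -> N -> N -> Prop) :
  (forall a b c d, P a b c d -> P b a c d) ->
  (forall a b c d, P a b c d -> P a c b d) ->
  (forall a b c d, P a b c d -> P a b d c) ->
  forall a b c d, distinct4 a b c d -> P a b c d ->
  exists p q r s, increasing4 p q r s /\ P p q r s.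
Proof.
  intros P12 P23 P34.
  assert (insert4 : forall a b c d, lt a b -> lt b c -> d <> a -> d <> b -> d <> c ->
            P a b c d -> exists p q r s, increasing4 p q r s /\ P p q r s).
  { intros a b c d ab bc da db dc H.
    destruct (lt_of_total (not_eq_sym dc)) as [cd|dc'].
    { exists a, b, c, d; exact (conj (conj ab (conj bc cd)) H). }
    destruct (lt_of_total (not_eq_sym db)) as [bd|db'].
    { exists a, b, d, c; exact (conj (conj ab (conj bd dc')) (P34 _ _ _ _ H)). }
    destruct (lt_of_total (not_eq_sym da)) as [ad|da'].
    { exists a, d, b, c; exact (conj (conj ad (conj db' bc)) (P23 _ _ _ _ (P34 _ _ _ _ H))). }
    exists d, a, b, c.
    exact (conj (conj da' (conj ab bc)) (P12 _ _ _ _ (P23 _ _ _ _ (P34 _ _ _ _ H)))). }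
  assert (insert3 : forall a b c d, lt a b -> c <> a -> c <> b -> d <> a -> d <> b -> d <> c ->
            P a b c d -> exists p q r s, increasing4 p q r s /\ P p q r s).
  { intros a b c d ab ca cb da db dc H.
    destruct (lt_of_total (not_eq_sym cb)) as [bc|cb'].
    { apply (insert4 a b c d); auto. }
    destruct (lt_of_total (not_eq_sym ca)) as [ac|ca'].
    { apply (insert4 a c b d); auto. }
    apply (insert4 c a b d); auto. }
  intros a b c d (ab & ac & ad & bc & bd & cd) H.
  destruct (lt_of_total ab) as [ab'|ba'].
  - apply (insert3 a b c d); auto.
  - apply (insert3 b a c d); auto.
Qed.

End StrictOrder.

Arguments increasing4 {N} le p q r s.

Lemma exists_fun_pair {N : Type} (a b a' b' : N) :
  a <> b -> exists f : N -> N, f a = a' /\ f b = b'.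
Proof.
  intros nab.
  exists (fun t => if excluded_middle_informative (t = a) then a' else b').
  destruct (excluded_middle_informative (a = a)), (excluded_middle_informative (b = a));
    split; congruence.
Qed.

Lemma exists_fun_triple {N : Type} (a b c a' b' c' : N) :
  a <> b -> a <> c -> b <> c -> exists f : N -> N, f a = a' /\ f b = b' /\ f c = c'.
Proof.
  intros nab nac nbc.
  exists (fun t => if excluded_middle_informative (t = a) then a'
                   else if excluded_middle_informative (t = b) then b' else c').
  destruct (excluded_middle_informative (a = a)), (excluded_middle_informative (b = a)),
    (excluded_middle_informative (b = b)), (excluded_middle_informative (c = a)),
    (excluded_middle_informative (c = b)); repeat split; congruence.
Qed.

Section Hypergraph.

Context {N : Type} (E : N -> N -> N -> bool).
Hypothesis E_hyper : is_3hypergraph E.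

Lemma E_swap12 x y z : E y x z = E x y z.
Proof. destruct E_hyper as (H12 & _ & _); auto. Qed.

Lemma E_swap23 x y z : E x z y = E x y z.
Proof. destruct E_hyper as (_ & H23 & _); auto. Qed.

Lemma E_swap13 x y z : E z y x = E x y z.
Proof. rewrite E_swap12, E_swap23, E_swap12; reflexivity. Qed.

Lemma E_rotate x y z : E y z x = E x y z.
Proof. rewrite E_swap23, E_swap12; reflexivity. Qed.

Lemma E_distinct x y z : E x y z = true -> x <> y /\ y <> z /\ x <> z.
Proof. destruct E_hyper as (_ & _ & H); auto. Qed.

Lemma E_not_distinct x y z : x = y \/ y = z \/ x = z -> E x y z = false.
Proof.
  intros Heq; destruct (E x y z) eqn:e; [|reflexivity].
  apply E_distinct in e; tauto.
Qed.

Lemma E_on_triple a b c x y z :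
  In x [a; b; c] -> In y [a; b; c] -> In z [a; b; c] ->
  x <> y -> y <> z -> x <> z -> E x y z = E a b c.
Proof.
  intros Hx Hy Hz; simpl in Hx, Hy, Hz.
  destruct Hx as [<-|[<-|[<-|[]]]]; destruct Hy as [<-|[<-|[<-|[]]]];
    destruct Hz as [<-|[<-|[<-|[]]]]; intros; try congruence;
    first [ reflexivity | apply E_swap12 | apply E_swap23 | apply E_rotate
          | symmetry; apply E_rotate | rewrite E_swap23; symmetry; apply E_rotate ].
Qed.

Lemma E_on_pair a b x y z :
  In x [a; b] -> In y [a; b] -> In z [a; b] -> E x y z = false.
Proof.
  intros Hx Hy Hz; apply E_not_distinct; simpl in Hx, Hy, Hz.
  destruct Hx as [<-|[<-|[]]]; destruct Hy as [<-|[<-|[]]]; destruct Hz as [<-|[<-|[]]];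
    auto.
Qed.

Definition edge_pattern (p q r s : N) : bool * bool * bool * bool :=
  (E p q r, E p q s, E p r s, E q r s).

Definition pattern_size (pat : bool * bool * bool * bool) : nat :=
  let '(e1, e2, e3, e4) := pat in Nat.b2n e1 + Nat.b2n e2 + Nat.b2n e3 + Nat.b2n e4.

Lemma nedges4_edge_pattern p q r s : nedges4 E p q r s = pattern_size (edge_pattern p q r s).
Proof. reflexivity. Qed.

Lemma aut_edge_pattern g p q r s :
  is_aut E g -> edge_pattern (g p) (g q) (g r) (g s) = edge_pattern p q r s.
Proof. intros [_ Hg]; unfold edge_pattern; rewrite !Hg; reflexivity. Qed.

Lemma nedges4_swap12 a b c d : nedges4 E a b c d = nedges4 E b a c d.
Proof. unfold nedges4; rewrite (E_swap12 a b c), (E_swap12 a b d); lia. Qed.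

Lemma nedges4_swap23 a b c d : nedges4 E a b c d = nedges4 E a c b d.
Proof. unfold nedges4; rewrite (E_swap23 a b c), (E_swap12 b c d); lia. Qed.

Lemma nedges4_swap34 a b c d : nedges4 E a b c d = nedges4 E a b d c.
Proof. unfold nedges4; rewrite (E_swap23 a c d), (E_swap23 b c d); lia. Qed.

Lemma Crel_diag le x y : y <> x -> Crel E le x y y.
Proof. intros; left; auto. Qed.

Lemma Crel_min le x y z :
  lt_of le x y -> lt_of le x z -> E x y z = true -> Crel E le x y z.
Proof.
  intros xy xz e; pose proof (E_distinct _ _ _ e) as (nxy & nyz & nxz).
  right; left; exact (conj nxy (conj nyz (conj nxz (conj xy (conj xz e))))).
Qed.

Lemma Crel_max le x y z :
  lt_of le y x -> lt_of le z x -> y <> z -> E x y z = false -> Crel E le x y z.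
Proof.
  intros yx zx nyz e; right; right.
  exact (conj (not_eq_sym (lt_of_neq yx)) (conj nyz
           (conj (not_eq_sym (lt_of_neq zx)) (conj yx (conj zx e))))).
Qed.

Lemma Crel_swap le x y z : Crel E le x y z -> Crel E le x z y.
Proof.
  intros [[-> nyx] | [H | H]]; [left; auto | right; left | right; right];
    rewrite E_swap23; intuition congruence.
Qed.

End Hypergraph.

Section Homogeneous.

Context {N : Type} (E : N -> N -> N -> bool) (le : N -> N -> Prop).
Hypotheses (E_hyper : is_3hypergraph E) (E_homogeneous : set_homogeneous_le4 E)
  (le_total : is_total_order le) (le_aut_invariant : order_preserved E le).
Hypothesis E_types : forall i, 1 <= i <= 3 ->
  exists a b c d, distinct4 a b c d /\ nedges4 E a b c d = i.
Hypothesis E_rule : forall u1 u2 u3 u4,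
  lt_of le u1 u2 -> lt_of le u2 u3 -> lt_of le u3 u4 ->
  (nedges4 E u1 u2 u3 u4 = 1 -> E u1 u2 u3 = true) /\
  (nedges4 E u1 u2 u3 u4 = 2 -> E u1 u3 u4 = true /\ E u2 u3 u4 = true) /\
  (nedges4 E u1 u2 u3 u4 = 3 ->
     E u1 u2 u3 = true /\ E u1 u2 u4 = true /\ E u1 u3 u4 = true).

Local Notation lt := (lt_of le).
Local Notation edge_pattern := (edge_pattern E).

Ltac E_perm H :=
  first [ exact H | rewrite (E_swap12 E E_hyper); exact H | rewrite (E_swap23 E E_hyper); exact H
        | rewrite (E_swap13 E E_hyper); exact H | rewrite (E_rotate E E_hyper); exact H
        | rewrite <- (E_rotate E E_hyper); exact H ].

Lemma aut_lt g x y : is_aut E g -> lt x y -> lt (g x) (g y).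
Proof.
  intros Hg [xy nxy]; split; [exact (le_aut_invariant g Hg x y xy)|].
  destruct Hg as [[h [hg _]] _].
  intros e; apply nxy; rewrite <- (hg x), <- (hg y), e; reflexivity.
Qed.

Lemma aut_increasing4 g p q r s :
  is_aut E g -> increasing4 le p q r s -> increasing4 le (g p) (g q) (g r) (g s).
Proof. intros Hg (pq & qr & rs); repeat split; apply aut_lt; assumption. Qed.

Lemma homogeneous_pair a b a' b' :
  lt a b -> lt a' b' ->
  exists g, is_aut E g /\ (forall v, In v [a'; b'] <-> exists u, In u [a; b] /\ g u = v).
Proof.
  intros ab ab'.
  destruct (exists_fun_pair a b a' b' (lt_of_neq ab)) as (f & fa & fb).
  pose proof (lt_of_neq ab') as nab'.
  apply E_homogeneous.
  - exact (NoDup_increasing2 ab).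
  - exact (NoDup_increasing2 ab').
  - simpl; lia.
  - reflexivity.
  - exists f; split; [|split].
    + intros x Hx; simpl in Hx |- *.
      destruct Hx as [<-|[<-|[]]]; rewrite ?fa, ?fb; auto.
    + intros x y Hx Hy; simpl in Hx, Hy.
      destruct Hx as [<-|[<-|[]]]; destruct Hy as [<-|[<-|[]]]; congruence.
    + intros x y z Hx Hy Hz.
      rewrite (E_on_pair E E_hyper a b x y z), (E_on_pair E E_hyper a' b'); auto;
        simpl in Hx, Hy, Hz |- *;
        destruct Hx as [<-|[<-|[]]]; destruct Hy as [<-|[<-|[]]];
        destruct Hz as [<-|[<-|[]]]; rewrite ?fa, ?fb; auto.
Qed.

Lemma homogeneous_triple a b c a' b' c' :
  lt a b -> lt b c -> lt a' b' -> lt b' c' -> E a b c = E a' b' c' ->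
  exists g, is_aut E g /\
    (forall v, In v [a'; b'; c'] <-> exists u, In u [a; b; c] /\ g u = v).
Proof.
  intros ab bc ab' bc' Habc.
  destruct (exists_fun_triple a b c a' b' c' (lt_of_neq ab)
              (lt_of_neq (lt_of_trans le_total ab bc)) (lt_of_neq bc)) as (f & fa & fb & fc).
  pose proof (NoDup_increasing3 le_total ab' bc') as V_nodup.
  assert (f_into : forall x, In x [a; b; c] -> In (f x) [a'; b'; c']).
  { intros x Hx; simpl in Hx |- *.
    destruct Hx as [<-|[<-|[<-|[]]]]; rewrite ?fa, ?fb, ?fc; auto. }
  assert (f_inj : forall x y, In x [a; b; c] -> In y [a; b; c] -> f x = f y -> x = y).
  { inversion_clear V_nodup as [|? ? nin' V_nodup']; inversion_clear V_nodup'.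
    intros x y Hx Hy; simpl in Hx, Hy, nin'.
    destruct Hx as [<-|[<-|[<-|[]]]]; destruct Hy as [<-|[<-|[<-|[]]]];
      rewrite ?fa, ?fb, ?fc; simpl in *; intuition congruence. }
  apply E_homogeneous; [exact (NoDup_increasing3 le_total ab bc) | exact V_nodup
                        | simpl; lia | reflexivity |].
  exists f; split; [exact f_into|split; [exact f_inj|]].
  intros x y z Hx Hy Hz.
  destruct (classic (x = y \/ y = z \/ x = z)) as [Heq|Hdist].
  - rewrite !E_not_distinct; auto; intuition congruence.
  - assert (f x <> f y /\ f y <> f z /\ f x <> f z) as (nxy & nyz & nxz)
      by (repeat split; intros e; apply Hdist; eauto).
    rewrite (E_on_triple E E_hyper a' b' c' (f x) (f y) (f z)),
      (E_on_triple E E_hyper a b c x y z); auto; intuition.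
Qed.

(* Automorphisms preserve the order, so they respect positions in increasing tuples. *)
Lemma transport_pair a b a' b' :
  lt a b -> lt a' b' -> exists g, is_aut E g /\ g a = a' /\ g b = b'.
Proof.
  intros ab ab'.
  destruct (homogeneous_pair a b a' b' ab ab') as (g & g_aut & g_onto).
  exists g; split; [exact g_aut|].
  apply (increasing2_in_increasing2 le_total ab' (aut_lt g a b g_aut ab));
    apply g_onto; [exists a | exists b]; simpl; auto.
Qed.

Lemma transport_triple a b c a' b' c' :
  lt a b -> lt b c -> lt a' b' -> lt b' c' -> E a b c = E a' b' c' ->
  exists g, is_aut E g /\ g a = a' /\ g b = b' /\ g c = c'.
Proof.
  intros ab bc ab' bc' Habc.
  destruct (homogeneous_triple a b c a' b' c' ab bc ab' bc' Habc) as (g & g_aut & g_onto).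
  exists g; split; [exact g_aut|].
  apply (increasing3_in_increasing3 le_total ab' bc'
           (aut_lt g a b g_aut ab) (aut_lt g b c g_aut bc));
    apply g_onto; [exists a | exists b | exists c]; simpl; auto.
Qed.

Lemma extend_pair_below p q r a b :
  lt p q -> lt q r -> lt a b -> exists w, lt w a /\ E w a b = E p q r.
Proof.
  intros pq qr ab.
  destruct (transport_pair q r a b qr ab) as (g & Hg & <- & <-).
  exists (g p); split; [apply aut_lt|destruct Hg]; auto.
Qed.

Lemma extend_pair_between p q r a b :
  lt p q -> lt q r -> lt a b -> exists w, lt a w /\ lt w b /\ E a w b = E p q r.
Proof.
  intros pq qr ab.
  destruct (transport_pair p r a b (lt_of_trans le_total pq qr) ab) as (g & Hg & <- & <-).
  exists (g q); split; [|split]; [apply aut_lt.. |destruct Hg]; auto.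
Qed.

Lemma extend_pair_above p q r a b :
  lt p q -> lt q r -> lt a b -> exists w, lt b w /\ E a b w = E p q r.
Proof.
  intros pq qr ab.
  destruct (transport_pair p q a b pq ab) as (g & Hg & <- & <-).
  exists (g r); split; [apply aut_lt|destruct Hg]; auto.
Qed.

Lemma extend_below p q r s a b c :
  increasing4 le p q r s -> lt a b -> lt b c -> E a b c = E q r s ->
  exists w, increasing4 le w a b c /\ edge_pattern w a b c = edge_pattern p q r s.
Proof.
  intros Hpqrs ab bc Habc; pose proof Hpqrs as (pq & qr & rs).
  destruct (transport_triple q r s a b c qr rs ab bc (eq_sym Habc)) as (g & Hg & <- & <- & <-).
  exists (g p); split; [apply aut_increasing4 | apply aut_edge_pattern]; assumption.
Qed.

Lemma extend_between12 p q r s a b c :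
  increasing4 le p q r s -> lt a b -> lt b c -> E a b c = E p r s ->
  exists w, increasing4 le a w b c /\ edge_pattern a w b c = edge_pattern p q r s.
Proof.
  intros Hpqrs ab bc Habc; pose proof Hpqrs as (pq & qr & rs).
  destruct (transport_triple p r s a b c (lt_of_trans le_total pq qr) rs ab bc (eq_sym Habc))
    as (g & Hg & <- & <- & <-).
  exists (g q); split; [apply aut_increasing4 | apply aut_edge_pattern]; assumption.
Qed.

Lemma extend_between23 p q r s a b c :
  increasing4 le p q r s -> lt a b -> lt b c -> E a b c = E p q s ->
  exists w, increasing4 le a b w c /\ edge_pattern a b w c = edge_pattern p q r s.
Proof.
  intros Hpqrs ab bc Habc; pose proof Hpqrs as (pq & qr & rs).
  destruct (transport_triple p q s a b c pq (lt_of_trans le_total qr rs) ab bc (eq_sym Habc))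
    as (g & Hg & <- & <- & <-).
  exists (g r); split; [apply aut_increasing4 | apply aut_edge_pattern]; assumption.
Qed.

Lemma extend_above p q r s a b c :
  increasing4 le p q r s -> lt a b -> lt b c -> E a b c = E p q r ->
  exists w, increasing4 le a b c w /\ edge_pattern a b c w = edge_pattern p q r s.
Proof.
  intros Hpqrs ab bc Habc; pose proof Hpqrs as (pq & qr & rs).
  destruct (transport_triple p q r a b c pq qr ab bc (eq_sym Habc)) as (g & Hg & <- & <- & <-).
  exists (g s); split; [apply aut_increasing4 | apply aut_edge_pattern]; assumption.
Qed.

Lemma edge_pattern_cases p q r s : increasing4 le p q r s ->
  edge_pattern p q r s = (false, false, false, false) \/
  edge_pattern p q r s = (true, false, false, false) \/
  edge_pattern p q r s = (false, false, true, true) \/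
  edge_pattern p q r s = (true, true, true, false) \/
  edge_pattern p q r s = (true, true, true, true).
Proof.
  intros (pq & qr & rs).
  destruct (E_rule p q r s pq qr rs) as (R1 & R2 & R3).
  unfold edge_pattern, nedges4 in *.
  destruct (E p q r), (E p q s), (E p r s), (E q r s); simpl in *;
    intuition (auto || discriminate).
Qed.

Lemma exists_increasing4_nedges i :
  1 <= i <= 3 -> exists p q r s, increasing4 le p q r s /\ nedges4 E p q r s = i.
Proof.
  intros Hi; destruct (E_types i Hi) as (a & b & c & d & Habcd & Hn).
  refine (sort_distinct4 le_total (fun a b c d => nedges4 E a b c d = i) _ _ _ a b c d Habcd Hn);
    intros a' b' c' d' H; rewrite <- H; symmetry;
    first [apply nedges4_swap12 | apply nedges4_swap23 | apply nedges4_swap34]; assumption.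
Qed.

Lemma exists_edge_pattern pat :
  pat = (true, false, false, false) \/ pat = (false, false, true, true) \/
  pat = (true, true, true, false) ->
  exists p q r s, increasing4 le p q r s /\ edge_pattern p q r s = pat.
Proof.
  intros Hpat.
  destruct (exists_increasing4_nedges (pattern_size pat)) as (p & q & r & s & Hinc & Hn).
  { destruct Hpat as [-> | [-> | ->]]; simpl; lia. }
  exists p, q, r, s; split; [exact Hinc|].
  rewrite nedges4_edge_pattern in Hn.
  destruct Hpat as [-> | [-> | ->]];
    destruct (edge_pattern_cases p q r s Hinc) as [H|[H|[H|[H|H]]]];
    rewrite H in Hn |- *; simpl in Hn; congruence.
Qed.

(* Transporting the one-edge type from (t1, t2, t3) onto (t0, t1, t3) yields w < t0 with
   w t0 t1 an edge; then {w, t0, t1, t2} has the edges w t0 t1 and t0 t1 t2, which only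
   the complete type allows. *)
Lemma exists_complete_type :
  exists p q r s, increasing4 le p q r s /\ edge_pattern p q r s = (true, true, true, true).
Proof.
  destruct (exists_edge_pattern (true, false, false, false)) as (t0 & t1 & t2 & t3 & Ht & Hpat);
    [auto|].
  pose proof Ht as (t01 & t12 & t23).
  pose proof Hpat as Ht_edges; injection Ht_edges as e012 e013 e023 e123.
  destruct (extend_below t0 t1 t2 t3 t0 t1 t3 Ht t01 (lt_of_trans le_total t12 t23))
    as (w & (w0 & _) & Hw); [congruence|].
  rewrite Hpat in Hw; injection Hw as ew01 _ _ _.
  exists w, t0, t1, t2; split; [exact (conj w0 (conj t01 t12))|].
  destruct (edge_pattern_cases w t0 t1 t2 (conj w0 (conj t01 t12))) as [H|[H|[H|[H|H]]]];
    injection H; congruence.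
Qed.

(* Transporting the two-edge type from (v1, v2, v3) onto (t0, t1, t2) yields w < t0 with
   w t0 t1 a non-edge; then {w, t0, t1, t3} misses w t0 t1 and t0 t1 t3, which only the
   empty type allows. *)
Lemma exists_empty_type :
  exists p q r s, increasing4 le p q r s /\ edge_pattern p q r s = (false, false, false, false).
Proof.
  destruct (exists_edge_pattern (true, false, false, false)) as (t0 & t1 & t2 & t3 & Ht & Hpat);
    [auto|].
  destruct (exists_edge_pattern (false, false, true, true)) as (v0 & v1 & v2 & v3 & Hv & Hvpat);
    [auto|].
  pose proof Ht as (t01 & t12 & t23).
  pose proof Hpat as Ht_edges; injection Ht_edges as e012 e013 e023 e123.
  pose proof Hvpat as Hv_edges; injection Hv_edges as f012 f013 f023 f123.
  destruct (extend_below v0 v1 v2 v3 t0 t1 t2 Hv t01 t12) as (w & (w0 & _) & Hw);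
    [congruence|].
  rewrite Hvpat in Hw; injection Hw as ew01 _ _ _.
  pose proof (lt_of_trans le_total t12 t23) as t13.
  exists w, t0, t1, t3; split; [exact (conj w0 (conj t01 t13))|].
  destruct (edge_pattern_cases w t0 t1 t3 (conj w0 (conj t01 t13))) as [H|[H|[H|[H|H]]]];
    injection H; congruence.
Qed.

Definition below_witness x y z w : Prop :=
  Crel E le w y z /\ Crel E le x y w /\ Crel E le x z w /\ lt w y /\ lt w z.

Definition above_witness x y z w : Prop :=
  Crel E le w y z /\ Crel E le x y w /\ Crel E le x z w /\ lt y w /\ lt z w.

(* (C8) strengthened by also asking C(x; z, w), which makes it symmetric in y and z. *)
Definition C8_witnessed x y z : Prop :=
  (exists w, below_witness x y z w) /\ (exists w, above_witness x y z w).

Lemma C8_witnessed_swap x y z : C8_witnessed x y z -> C8_witnessed x z y.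
Proof.
  intros [(w1 & C1 & C2 & C3 & w1y & w1z) (w2 & D1 & D2 & D3 & yw2 & zw2)].
  split; [exists w1 | exists w2].
  - exact (conj (Crel_swap E E_hyper le _ _ _ C1) (conj C3 (conj C2 (conj w1z w1y)))).
  - exact (conj (Crel_swap E E_hyper le _ _ _ D1) (conj D3 (conj D2 (conj zw2 yw2)))).
Qed.

Lemma C8_witnessed_diag_lt x y : lt x y -> C8_witnessed x y y.
Proof.
  intros xy.
  destruct exists_complete_type as (o0 & o1 & o2 & o3 & (o01 & o12 & _) & Ho).
  injection Ho as e012 _ _ _.
  split.
  - destruct (extend_pair_between o0 o1 o2 x y o01 o12 xy) as (w & xw & wy & e).
    rewrite e012 in e.
    assert (Cxyw : Crel E le x y w) by (apply Crel_min; auto; E_perm e).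
    exists w; exact (conj (Crel_diag E le w y (not_eq_sym (lt_of_neq wy))) (conj Cxyw (conj Cxyw (conj wy wy)))).
  - destruct (extend_pair_above o0 o1 o2 x y o01 o12 xy) as (w & yw & e).
    rewrite e012 in e.
    assert (Cxyw : Crel E le x y w) by (apply Crel_min; eauto using lt_of_trans).
    exists w.
    exact (conj (Crel_diag E le w y (lt_of_neq yw)) (conj Cxyw (conj Cxyw (conj yw yw)))).
Qed.

Lemma C8_witnessed_diag_gt x y : lt y x -> C8_witnessed x y y.
Proof.
  intros yx.
  destruct exists_empty_type as (z0 & z1 & z2 & z3 & (z01 & z12 & _) & Hz).
  injection Hz as e012 _ _ _.
  split.
  - destruct (extend_pair_below z0 z1 z2 y x z01 z12 yx) as (w & wy & e).
    rewrite e012 in e.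
    assert (Cxyw : Crel E le x y w).
    { apply Crel_max; eauto using lt_of_trans, not_eq_sym, lt_of_neq; E_perm e. }
    exists w; exact (conj (Crel_diag E le w y (not_eq_sym (lt_of_neq wy)))
                      (conj Cxyw (conj Cxyw (conj wy wy)))).
  - destruct (extend_pair_between z0 z1 z2 y x z01 z12 yx) as (w & yw & wx & e).
    rewrite e012 in e.
    assert (Cxyw : Crel E le x y w).
    { apply Crel_max; eauto using lt_of_neq; E_perm e. }
    exists w; exact (conj (Crel_diag E le w y (lt_of_neq yw))
                      (conj Cxyw (conj Cxyw (conj yw yw)))).
Qed.

Lemma C8_witnessed_min x y z : lt x y -> lt y z -> E x y z = true -> C8_witnessed x y z.
Proof.
  intros xy yz exyz.
  pose proof (lt_of_trans le_total xy yz) as xz.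
  split.
  - destruct exists_complete_type as (o0 & o1 & o2 & o3 & Ho & Hpat).
    destruct (extend_between12 o0 o1 o2 o3 x y z Ho xy yz) as (w & (xw & wy & _) & Hw);
      [injection Hpat; congruence|].
    rewrite Hpat in Hw; injection Hw as exwy exwz _ ewyz.
    exists w; split; [|split; [|split; [|split]]]; auto.
    + apply Crel_min; eauto using lt_of_trans.
    + apply Crel_min; auto; E_perm exwy.
    + apply Crel_min; auto; E_perm exwz.
    + exact (lt_of_trans le_total wy yz).
  - destruct (exists_edge_pattern (true, true, true, false)) as (u0 & u1 & u2 & u3 & Hu & Hpat);
      [auto|].
    destruct (extend_above u0 u1 u2 u3 x y z Hu xy yz) as (w & (_ & _ & zw) & Hw);
      [injection Hpat; congruence|].
    rewrite Hpat in Hw; injection Hw as _ exyw exzw eyzw.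
    pose proof (lt_of_trans le_total yz zw) as yw.
    exists w; split; [|split; [|split; [|split]]]; auto.
    + apply Crel_max; auto.
      * apply (E_distinct E E_hyper _ _ _ exyz).
      * E_perm eyzw.
    + apply Crel_min; eauto using lt_of_trans.
    + apply Crel_min; eauto using lt_of_trans.
Qed.

Lemma C8_witnessed_max x y z : lt y z -> lt z x -> E x y z = false -> C8_witnessed x y z.
Proof.
  intros yz zx exyz.
  pose proof (lt_of_trans le_total yz zx) as yx.
  assert (eyzx : E y z x = false) by E_perm exyz.
  split.
  - destruct (exists_edge_pattern (true, false, false, false)) as (t0 & t1 & t2 & t3 & Ht & Hpat);
      [auto|].
    destruct (extend_below t0 t1 t2 t3 y z x Ht yz zx) as (w & (wy & _ & _) & Hw);
      [injection Hpat; congruence|].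
    rewrite Hpat in Hw; injection Hw as ewyz ewyx ewzx _.
    pose proof (lt_of_trans le_total wy yz) as wz.
    pose proof (lt_of_trans le_total wz zx) as wx.
    exists w; split; [|split; [|split; [|split]]]; auto.
    + apply Crel_min; auto.
    + apply Crel_max; eauto using not_eq_sym, lt_of_neq; E_perm ewyx.
    + apply Crel_max; eauto using not_eq_sym, lt_of_neq; E_perm ewzx.
  - destruct exists_empty_type as (z0 & z1 & z2 & z3 & Hz & Hpat).
    destruct (extend_between23 z0 z1 z2 z3 y z x Hz yz zx) as (w & (_ & zw & wx) & Hw);
      [injection Hpat; congruence|].
    rewrite Hpat in Hw; injection Hw as eyzw _ eywx ezwx.
    pose proof (lt_of_trans le_total yz zw) as yw.
    exists w; split; [|split; [|split; [|split]]]; auto.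
    + apply Crel_max; eauto using lt_of_neq; E_perm eyzw.
    + apply Crel_max; eauto using lt_of_neq; E_perm eywx.
    + apply Crel_max; eauto using lt_of_neq; E_perm ezwx.
Qed.

Lemma Crel_C8_witnessed x y z : Crel E le x y z -> C8_witnessed x y z.
Proof.
  intros [[<- nyx] | [(_ & nyz & _ & xy & xz & e) | (_ & nyz & _ & yx & zx & e)]].
  - destruct (lt_of_total le_total nyx) as [yx|xy];
      [apply C8_witnessed_diag_gt | apply C8_witnessed_diag_lt]; assumption.
  - destruct (lt_of_total le_total nyz) as [yz|zy].
    + apply C8_witnessed_min; assumption.
    + apply C8_witnessed_swap, C8_witnessed_min; auto; E_perm e.
  - destruct (lt_of_total le_total nyz) as [yz|zy].
    + apply C8_witnessed_max; assumption.
    + apply C8_witnessed_swap, C8_witnessed_max; auto; E_perm e.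
Qed.

Lemma Crel_compatible x y z : lt x y -> lt y z -> Crel E le x y z \/ Crel E le z x y.
Proof.
  intros xy yz; pose proof (lt_of_trans le_total xy yz) as xz.
  destruct (E x y z) eqn:e.
  - left; apply Crel_min; assumption.
  - right; apply Crel_max; auto.
    + exact (lt_of_neq xy).
    + E_perm e.
Qed.

End Homogeneous.

Theorem lemma3p11 (N : Type) (E : N -> N -> N -> bool) (le : N -> N -> Prop) :
  standing_assumptions E le ->
  (forall x y z : N, lt_of le x y -> lt_of le y z ->
     Crel E le x y z \/ Crel E le z x y) /\
  (forall x y z : N, Crel E le x y z ->
     (exists w1 : N, Crel E le w1 y z /\ Crel E le x y w1 /\
                     lt_of le w1 y /\ lt_of le w1 z) /\
     (exists w2 : N, Crel E le w2 y z /\ Crel E le x y w2 /\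
                     lt_of le y w2 /\ lt_of le z w2)).
Proof.
  intros (_ & E_hyper & E_homogeneous & le_total & le_aut_invariant & E_types & E_rule).
  split.
  - intros x y z; apply Crel_compatible; assumption.
  - intros x y z Cxyz.
    destruct (Crel_C8_witnessed E le E_hyper E_homogeneous le_total le_aut_invariant
                E_types E_rule x y z Cxyz)
      as [(w1 & C1 & C2 & _ & w1y & w1z) (w2 & D1 & D2 & _ & yw2 & zw2)].
    split; [exists w1 | exists w2]; auto.
Qed.
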